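(* Let $q$ be a prime power, $m\ge 1$, $1\le k\le n$, let $g_1,\dots,g_n\in\mathbb{F}_{q^m}$ be linearly independent over $\mathbb{F}_q$, let $\mathbf g=(g_1,\dots,g_n)$, let $C$ be the Gabidulin code defined below, and let $\mathbf r\in\mathbb{F}_{q^m}^n$ be a received word. Then Algorithm 1 (described in the context), run on $k,n,\mathbf g,\mathbf r$, returns a list whose elements are exactly the message polynomials $m(x)$ ($m\in\mathcal{L}_q(x,q^m)$, $\mathrm{qdeg}(m)<k$) of all codewords $\mathbf c=(m(g_1),\dots,m(g_n))\in C$ that are closest to $\mathbf r$ in the rank distance, i.e. with $d_R(\mathbf c,\mathbf r)=\min_{\mathbf c'\in C}d_R(\mathbf c',\mathbf r)$.
   Context: Write $[i]:=q^i$. A $q$-linearized polynomial over $\mathbb{F}_{q^m}$ is $f(x)=\sum_{i=0}^{d}a_ix^{[i]}$ with $a_i\in\mathbb{F}_{q^m}$; if $a_d\ne0$ then $d=\mathrm{qdeg}(f)$ is its $q$-degree ($\mathrm{qdeg}(0)=-\infty$), and $f$ is monic if $a_d=1$. The set $\mathcal{L}_q(x,q^m)$ of such polynomials is a (noncommutative) ring under addition and composition $f\circ g=f(g(x))$. For $\mathbb{F}_q$-linearly independent $g_1,\dots,g_n$, $\Pi_{\mathbf g}(x)=\prod_{u\in\langle g_1,\dots,g_n\rangle}(x-u)$ ($\mathbb{F}_q$-linear span) is the $q$-annihilator polynomial; it lies in $\mathcal{L}_q(x,q^m)$ and has $q$-degree $n$. For $\mathbf r=(r_1,\dots,r_n)$,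 the $q$-Lagrange polynomial is $\Lambda_{\mathbf g,\mathbf r}(x)=\sum_{i=1}^n(-1)^{n-i}r_i\det(\mathfrak D_i(\mathbf g,x))/\det(M_n(g_1,\dots,g_n))$, where $M_n(v_1,\dots,v_s)$ is the $n\times s$ matrix with $(j,l)$ entry $v_l^{[j-1]}$ and $\mathfrak D_i(\mathbf g,x)$ is $M_n(g_1,\dots,g_n,x)$ with the $i$-th column removed; it lies in $\mathcal{L}_q(x,q^m)$, has $q$-degree less than $n$ and satisfies $\Lambda_{\mathbf g,\mathbf r}(g_i)=r_i$. The Gabidulin code is $C=\{(m(g_1),\dots,m(g_n)) : m\in\mathcal{L}_q(x,q^m),\ \mathrm{qdeg}(m)<k\}$, $m$ being the message polynomial of the codeword. The rank distance $d_R(\mathbf a,\mathbf b)$ of $\mathbf a,\mathbf b\in\mathbb{F}_{q^m}^n$ is the $\mathbb{F}_q$-rank of the $m\times n$ matrix over $\mathbb{F}_q$ obtained by expanding each coordinate of $\mathbf a-\mathbf b$ in a fixed $\mathbb{F}_q$-basis of $\mathbb{F}_{q^m}$. $\mathcal{L}_q(x,q^m)^2$ is a left module via $h\circ[f_1\ f_2]=[h\circ f_1\ \ h\circ f_2]$. The interpolation module $\mathfrak M(\mathbf r)$ is the set of all $\beta\circ[\Pi_{\mathbf g}(x)\ \ 0]+\gamma\circ[-\Lambda_{\mathbf g,\mathbf r}(x)\ \ x]$ with $\beta,\gamma\in\mathcal{L}_q(x,q^m)$. Monomials are $x^{[i]}e_j$ ($x^{[i]}$ in coordinate $j\in\{1,2\}$).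 The $(0,k-1)$-weighted term-over-position order: with $w_1=0,w_2=k-1$, $x^{[i_1]}e_{j_1}<x^{[i_2]}e_{j_2}$ iff $i_1+w_{j_1}<i_2+w_{j_2}$, or $i_1+w_{j_1}=i_2+w_{j_2}$ and $j_1<j_2$. The leading monomial $\mathrm{lm}(f)$ of a nonzero $f$ is its largest monomial (with nonzero coefficient), the leading term $\mathrm{lt}(f)$ is that monomial with its coefficient, and the leading position $\mathrm{lpos}(f)$ is its coordinate $j$. The weighted $q$-degree of $[f_1\ f_2]$ is $\max\{\mathrm{qdeg}(f_1),\mathrm{qdeg}(f_2)+k-1\}$. A basis of a submodule is a generating set whose elements are linearly independent ($\sum a_i\circ f^{(i)}=0$ with $a_i\in\mathcal{L}_q(x,q^m)$ implies all $a_i=0$). For nonzero $f^{(1)},\dots,f^{(s)}$, $f$ reduces modulo $F=\{f^{(1)},\dots,f^{(s)}\}$ in one step if $h=f-\sum_{i}(b_ix^{[a_i]})\circ f^{(i)}$ (sum over some of the $f^{(i)}$) with $\mathrm{lm}(f)=x^{[a_i]}\circ\mathrm{lm}(f^{(i)})$ for each such $i$ and $\mathrm{lt}(f)=\sum_i(b_ix^{[a_i]})\circ\mathrm{lt}(f^{(i)})$; $f$ is minimal w.r.t. $F$ if it cannot be so reduced. A basis $B$ is minimal if each $b\in B$ is minimal w.r.t. $B\setminus\{b\}$. Algorithm 1 (input $k,n,\mathbf g,\mathbf r$): (1) compute $\Pi_{\mathbf g},\Lambda_{\mathbf g,\mathbf r}$ and form $\mathfrak M(\mathbf r)$; (2)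 compute a minimal basis $\{b^{(1)},b^{(2)}\}$ of $\mathfrak M(\mathbf r)$ w.r.t. the $(0,k-1)$-weighted term-over-position order with $\mathrm{lpos}(b^{(1)})=1$, $\mathrm{lpos}(b^{(2)})=2$; (3) let $\ell_1,\ell_2$ be the weighted $q$-degrees of $b^{(1)},b^{(2)}$; (4) set list $:=$ empty, $j:=0$; while list is empty: for every $\beta\in\mathcal{L}_q(x,q^m)$ with $\mathrm{qdeg}(\beta)\le\ell_2-\ell_1+j$ and every monic $\gamma\in\mathcal{L}_q(x,q^m)$ with $\mathrm{qdeg}(\gamma)=j$, put $f=[f_1\ f_2]:=\beta\circ b^{(1)}+\gamma\circ b^{(2)}$, and if there is $m\in\mathcal{L}_q(x,q^m)$ with $f_1(x)=-f_2(m(x))$, add $m$ to the list; then $j:=j+1$. Return the list. *)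

From HB Require Import structures.
From mathcomp Require Import all_boot all_order all_algebra all_field.
Set Implicit Arguments. Unset Strict Implicit. Unset Printing Implicit Defensive.
Import Order.TTheory GRing.Theory Num.Theory.
Local Open Scope ring_scope.

(* F = F_q (q = #|F|, automatically a prime power),
   L = F_{q^m} as a finite-dimensional field extension of F (m = \dim {:L}). *)
Section Gabidulin.
Variables (F : finFieldType) (L : fieldExtType F).

Definition qq : nat := #|F|.

Definition qpow (i : nat) : nat := (qq ^ i)%N.

(* q-linearized polynomials: polynomials in {poly L} whose only nonzero
   coefficients are at exponents q^i.  The coefficient a_i of x^[i] is p`_(q^i). *)
Definition islin (p : {poly L}) : Prop :=
  forall e : nat, p`_e != 0 -> exists i : nat, e = qpow i.

Definition qcoef_nz (p : {poly L}) (i : nat) : bool := p`_(qpow i) != 0.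

(* q-degree: None stands for -infinity (zero polynomial). *)
Definition qdeg (p : {poly L}) : option nat :=
  if p == 0 then None
  else Some (\max_(i < size p | qcoef_nz p i) (i : nat))%N.

Definition qdeg_le (p : {poly L}) (d : int) : Prop :=
  match qdeg p with None => True | Some e => (e%:Z <= d)%R end.

Definition qdeg_lt (p : {poly L}) (d : nat) : Prop :=
  match qdeg p with None => True | Some e => (e < d)%N end.

Definition qmonic (p : {poly L}) : Prop :=
  exists d, qdeg p = Some d /\ p`_(qpow d) = 1.

(* Elements of L_q(x,q^m)^2, with the left action h o [f1 f2] = [h o f1  h o f2]. *)
Definition pair := ({poly L} * {poly L})%type.

Definition islin2 (f : pair) : Prop := islin f.1 /\ islin f.2.

Definition lact (h : {poly L}) (f : pair) : pair := (h \Po f.1, h \Po f.2).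

Definition padd (f g : pair) : pair := (f.1 + g.1, f.2 + g.2).

(* q-annihilator polynomial of the F-span of g_1..g_n (g independent, so each
   element of the span is  \sum_i c_i g_i  for exactly one c). *)
Definition Pi_g (n : nat) (g : 'I_n -> L) : {poly L} :=
  \prod_(c : {ffun 'I_n -> F}) ('X - (\sum_(i < n) c i *: g i)%:P).

(* Moore matrix M_n(v_1..v_s), 0-indexed: (j,l) entry v_l^[j]. *)
Definition moore (n s : nat) (v : 'I_s -> L) : 'M[L]_(n, s) :=
  \matrix_(j < n, l < s) v l ^+ qpow j.

(* M_n(g_1,...,g_n,x) with entries in {poly L}. *)
Definition moore_x (n : nat) (g : 'I_n -> L) : 'M[{poly L}]_(n, n.+1) :=
  \matrix_(j < n, l < n.+1)
     (if @insub nat (fun x => (x < n)%N) 'I_n (val l) is Some l'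
      then (g l' ^+ qpow j)%:P else 'X^(qpow j)).

(* q-Lagrange polynomial; with 0-indexed i, (-1)^(n-(i+1)). *)
Definition Lambda (n : nat) (g r : 'I_n -> L) : {poly L} :=
  \sum_(i < n)
     ((-1) ^+ (n - i.+1) * r i / \det (moore n g))%:P
       * \det (col' (widen_ord (leqnSn n) i) (moore_x g)).

Definition inM (n : nat) (g r : 'I_n -> L) (f : pair) : Prop :=
  exists beta gamma : {poly L}, islin beta /\ islin gamma /\
    f = padd (lact beta (Pi_g g, 0)) (lact gamma (- Lambda g r, 'X)).

Section Order.
Variable k : nat.

(* positions are 1 and 2 *)
Definition wt (j : nat) : nat := if j == 1%N then 0%N else (k - 1)%N.

Definition pcomp (f : pair) (j : nat) : {poly L} := if j == 1%N then f.1 else f.2.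

Definition coefm (f : pair) (i j : nat) : L := (pcomp f j)`_(qpow i).

(* (0,k-1)-weighted term-over-position order: (i1,j1) < (i2,j2) *)
Definition mono_lt (i1 j1 i2 j2 : nat) : bool :=
  ((i1 + wt j1 < i2 + wt j2)%N) ||
  ((i1 + wt j1 == i2 + wt j2)%N && (j1 < j2)%N).

Definition is_lt (f : pair) (i j : nat) (c : L) : Prop :=
  (j == 1%N \/ j == 2%N) /\ c != 0 /\ coefm f i j = c /\
  forall i' j', (j' == 1%N \/ j' == 2%N) -> coefm f i' j' != 0 ->
     (i' = i /\ j' = j) \/ mono_lt i' j' i j.

Definition lpos (f : pair) (j : nat) : Prop := exists i c, is_lt f i j c.

Definition term (c : L) (i j : nat) : pair :=
  if j == 1%N then (c *: 'X^(qpow i), 0) else (0, c *: 'X^(qpow i)).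

(* f reduces in one step modulo the one-element set {g} *)
Definition reduces1 (f g : pair) : Prop :=
  exists i j c i' j' c' (a : nat) (b : L),
    is_lt f i j c /\ is_lt g i' j' c' /\
    term 1 i j = lact ('X^(qpow a)) (term 1 i' j') /\
    term c i j = lact (b *: 'X^(qpow a)) (term c' i' j').

Definition wdeg (f : pair) : option nat :=
  match qdeg f.1, qdeg f.2 with
  | None, None => None
  | Some a, None => Some a
  | None, Some b => Some (b + (k - 1))%N
  | Some a, Some b => Some (maxn a (b + (k - 1)))
  end.

Definition minimal_basis (n : nat) (g r : 'I_n -> L) (b1 b2 : pair) : Prop :=
  (* generating set of M(r) (in particular b1, b2 lie in M(r)) *)
  (forall f, inM g r f <->
     exists beta gamma, islin beta /\ islin gamma /\
       f = padd (lact beta b1) (lact gamma b2)) /\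
  (forall beta gamma, islin beta -> islin gamma ->
     padd (lact beta b1) (lact gamma b2) = (0, 0) -> beta = 0 /\ gamma = 0) /\
  b1 <> b2 /\ ~ reduces1 b1 b2 /\ ~ reduces1 b2 b1.

(* m is added to the list in iteration j of step (4) of Algorithm 1 *)
Definition alg_step (b1 b2 : pair) (l1 l2 j : nat) (m : {poly L}) : Prop :=
  islin m /\
  exists beta gamma, islin beta /\ qdeg_le beta (l2%:Z - l1%:Z + j%:Z) /\
    islin gamma /\ qmonic gamma /\ qdeg gamma = Some j /\
    let f := padd (lact beta b1) (lact gamma b2) in
    f.1 = - (f.2 \Po m).

End Order.

(* rank distance: F-rank of the (\dim L) x n expansion matrix in a fixed basis *)
Definition rank_dist (n : nat) (a b : 'I_n -> L) : nat :=
  \rank (\matrix_(i < \dim {: L}, j < n) coord (vbasis fullv) i (a j - b j)).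

Definition codeword (n : nat) (g : 'I_n -> L) (m : {poly L}) : 'I_n -> L :=
  fun i => m.[g i].

Definition closest_msg (n k : nat) (g r : 'I_n -> L) (m : {poly L}) : Prop :=
  islin m /\ qdeg_lt m k /\
  forall m', islin m' -> qdeg_lt m' k ->
    (rank_dist (codeword g m) r <= rank_dist (codeword g m') r)%N.

End Gabidulin.

(* A pair [f1 f2] lies in the interpolation module M(r) exactly when
   f1 + f2 o Lambda is a right multiple of the annihilator Pi_g.  Evaluating at
   the g_i shows that [-(h o m)  h] lies in M(r) iff h vanishes on the F_q-span
   E(m) of the error vector (m(g_i) - r_i)_i, whose dimension is the rank
   distance from the codeword of m to r; the annihilator of E(m) is such an h,
   of q-degree dim E(m).  The minimal basis {b1, b2} has the predictable leading
   position property: if beta o b1 + gamma o b2 has second component of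
   q-degree t and first component of q-degree at most t + k - 1, then
   qdeg gamma = t - qdeg b2.2.  Hence iteration j of step (4) finds exactly the
   messages with dim E(m) <= j + qdeg b2.2, and the first nonempty iteration
   returns the messages of the closest codewords. *)

From HB Require Import structures.
From mathcomp Require Import all_boot all_order all_algebra all_field all_fingroup all_solvable.
From mathcomp Require Import ring zify.
From Stdlib Require Import Classical_Prop.
Set Implicit Arguments. Unset Strict Implicit. Unset Printing Implicit Defensive.
Import Order.TTheory GRing.Theory Num.Theory.
Local Open Scope ring_scope.

Lemma classic_ex_minn (P : nat -> Prop) :
  (exists n, P n) -> exists2 n, P n & forall m, P m -> (n <= m)%N.
Proof.
move=> [n Pn]; elim: n {-2}n (leqnn n) Pn => [|N IH] n le_nN Pn.
  by exists n => // m _; move: le_nN; rewrite leqn0 => /eqP ->.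
have [[m Pm lt_mn]|no_less] := classic (exists2 m, P m & (m < n)%N).
  by apply: (IH m) => //; lia.
exists n => // m Pm; rewrite leqNgt; apply/negP => lt_mn.
by apply: no_less; exists m.
Qed.

Section Gabidulin.
Variables (F : finFieldType) (L : fieldExtType F).
Local Notation q := (qq F).
Local Notation qpow := (qpow F).

Lemma q_gt1 : (1 < q)%N. Proof. exact: finNzRing_gt1. Qed.

Lemma qpow_gt0 i : (0 < qpow i)%N.
Proof. by rewrite /qpow expn_gt0 ltnW // q_gt1. Qed.

Lemma qpowD a b : qpow (a + b) = (qpow a * qpow b)%N.
Proof. by rewrite /qpow expnD. Qed.

Lemma ltn_qpow a b : (qpow a < qpow b)%N = (a < b)%N.
Proof. by rewrite /qpow ltn_exp2l // q_gt1. Qed.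

Lemma leq_qpow a b : (qpow a <= qpow b)%N = (a <= b)%N.
Proof. by rewrite /qpow leq_exp2l // q_gt1. Qed.

Lemma qpow_inj : injective qpow.
Proof. by move=> a b /eqP; rewrite eqn_leq !leq_qpow -eqn_leq => /eqP. Qed.

Lemma ltn_qpow_self i : (i < qpow i)%N.
Proof. by rewrite /qpow ltn_expl // q_gt1. Qed.

Lemma pnat_pchar_q : [pchar F].-nat q.
Proof.
have [p _ pcharFp] := finPcharP F.
have := abelem_pgroup (fin_ring_pchar_abelem pcharFp).
rewrite pgroupE cardsT => /sub_in_pnat; apply=> x _.
by rewrite inE => /eqP ->.
Qed.

Lemma exprD_qpow (R : comNzRingType) :
  {subset [pchar F] <= [pchar R]} ->
  forall (x y : R) i, (x + y) ^+ qpow i = x ^+ qpow i + y ^+ qpow i.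
Proof.
move=> pcharFR x y i; apply: exprDn_pchar.
have : [pchar F].-nat (qpow i) by rewrite /qpow pnatX pnat_pchar_q.
by apply: sub_in_pnat => p _ /pcharFR.
Qed.

Lemma pchar_sub_L : {subset [pchar F] <= [pchar L]}.
Proof. by move=> p; rewrite (pchar_lalg L). Qed.

Lemma pchar_sub_polyL : {subset [pchar F] <= [pchar {poly L}]}.
Proof. by move=> p; rewrite pchar_poly => /pchar_sub_L. Qed.

Lemma exprD_qpowL (x y : L) i : (x + y) ^+ qpow i = x ^+ qpow i + y ^+ qpow i.
Proof. exact: exprD_qpow pchar_sub_L x y i. Qed.

Lemma exprD_qpow_poly (x y : {poly L}) i :
  (x + y) ^+ qpow i = x ^+ qpow i + y ^+ qpow i.
Proof. exact: exprD_qpow pchar_sub_polyL x y i. Qed.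

Lemma expr_qpow_scalar (c : F) i : c ^+ qpow i = c.
Proof.
elim: i => [|i IH]; first by rewrite expr1.
by rewrite /qpow expnSr exprM -/(qpow i) IH expf_card.
Qed.

Implicit Types (p u w P h : {poly L}) (s : seq L) (x y : L).

Definition linP (a : nat -> L) (N : nat) : {poly L} := \sum_(i < N) a i *: 'X^(qpow i).

Lemma coef_linP a N e : (linP a N)`_e = \sum_(i < N) a i * (e == qpow i)%:R.
Proof. by rewrite /linP coef_sum; apply: eq_bigr => i _; rewrite coefZ coefXn. Qed.

Lemma islin_linP a N : islin (linP a N).
Proof.
move=> e; rewrite coef_linP => nz.
have [/existsP[i]|/existsPn none] :=
  boolP [exists i : 'I_N, a i * (e == qpow i)%:R != 0].
  by case: (e =P qpow i) => [-> _|_]; [exists i | rewrite mulr0 eqxx].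
by rewrite big1 ?eqxx // in nz => i _; apply/eqP; have := none i; rewrite negbK.
Qed.

Lemma islin_linE p : islin p -> p = linP (fun i => p`_(qpow i)) (size p).
Proof.
move=> lin_p; apply/polyP => e; rewrite coef_linP.
have [pe0|pe_nz] := eqVneq p`_e 0.
  rewrite pe0; symmetry; apply: big1 => i _.
  by case: eqP => [<-|_]; rewrite ?pe0 ?mul0r ?mulr0.
have [i ei] := lin_p e pe_nz.
have i_lt : (i < size p)%N.
  apply: leq_trans (ltn_qpow_self i) _; rewrite -ei leqNgt.
  by apply: contra pe_nz => /ltnW/(nth_default 0) ->.
rewrite (bigD1 (Ordinal i_lt)) //= -ei eqxx mulr1 big1 ?addr0 // => j /eqP ne.
suff /negPf -> : e != qpow j by rewrite mulr0.
by rewrite ei; apply/eqP => /qpow_inj ij; apply: ne; exact: val_inj.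
Qed.

Lemma islinP p : islin p <-> exists a N, p = linP a N.
Proof.
split=> [lin_p|[a [N ->]]]; last exact: islin_linP.
by exists (fun i => p`_(qpow i)), (size p); apply: islin_linE.
Qed.

Lemma islin0 : islin (0 : {poly L}).
Proof. by move=> e; rewrite coef0 eqxx. Qed.

Lemma islinD p u : islin p -> islin u -> islin (p + u).
Proof.
move=> lin_p lin_u e; rewrite coefD.
by have [pe0|/lin_p //] := eqVneq p`_e 0; rewrite pe0 add0r => /lin_u.
Qed.

Lemma islinZ c p : islin p -> islin (c *: p).
Proof. by move=> lin_p e; rewrite coefZ mulf_eq0 negb_or => /andP[_ /lin_p]. Qed.

Lemma islinN p : islin p -> islin (- p).
Proof. by move=> lin_p; rewrite -scaleN1r; apply: islinZ. Qed.

Lemma islinB p u : islin p -> islin u -> islin (p - u).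
Proof. by move=> lin_p lin_u; apply: islinD lin_p (islinN lin_u). Qed.

Lemma islin_sum (I : Type) (r : seq I) (P : pred I) (f : I -> {poly L}) :
  (forall i, P i -> islin (f i)) -> islin (\sum_(i <- r | P i) f i).
Proof.
move=> lin_f; elim/big_rec: _ => [|i x Pi lin_x]; first exact: islin0.
exact: islinD (lin_f _ Pi) lin_x.
Qed.

Lemma islinXqpow i : islin ('X^(qpow i) : {poly L}).
Proof.
by move=> e; rewrite coefXn; case: (e =P qpow i) => [->|]; [exists i | rewrite eqxx].
Qed.

Lemma islinX : islin ('X : {poly L}).
Proof. by have := @islinXqpow 0; rewrite /qpow expn0 expr1. Qed.

Lemma islin_coef0 p : islin p -> p`_0 = 0.
Proof.
move=> lin_p; apply/eqP; apply/negPn/negP => /lin_p [i] qi0.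
by have := qpow_gt0 i; rewrite -qi0.
Qed.

Lemma horner_linP a N x : (linP a N).[x] = \sum_(i < N) a i * x ^+ qpow i.
Proof. by rewrite horner_sum; apply: eq_bigr => i _; rewrite hornerZ hornerXn. Qed.

Lemma lin_hornerD p x y : islin p -> p.[x + y] = p.[x] + p.[y].
Proof.
move=> /islinP[a [N ->]]; rewrite !horner_linP -big_split /=.
by apply: eq_bigr => i _; rewrite exprD_qpowL mulrDr.
Qed.

Lemma lin_horner0 p : islin p -> p.[0] = 0.
Proof. by move=> lin_p; rewrite horner_coef0 islin_coef0. Qed.

Lemma lin_hornerN p x : islin p -> p.[- x] = - p.[x].
Proof.
move=> lin_p; apply/eqP; rewrite -subr_eq0 opprK -lin_hornerD // addNr.
by rewrite lin_horner0.
Qed.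

Lemma lin_hornerB p x y : islin p -> p.[x - y] = p.[x] - p.[y].
Proof. by move=> lin_p; rewrite lin_hornerD // lin_hornerN. Qed.

Lemma lin_hornerZ p (c : F) x : islin p -> p.[c *: x] = c *: p.[x].
Proof.
move=> /islinP[a [N ->]]; rewrite !horner_linP scaler_sumr.
by apply: eq_bigr => i _; rewrite exprZn expr_qpow_scalar scalerAr.
Qed.

Lemma lin_horner_sum p (I : Type) (r : seq I) (P : pred I) (f : I -> L) :
  islin p -> p.[\sum_(i <- r | P i) f i] = \sum_(i <- r | P i) p.[f i].
Proof.
move=> lin_p; elim/big_rec2: _ => [|i y z _ <-]; first exact: lin_horner0.
by rewrite lin_hornerD.
Qed.

Lemma comp_linP a N u : linP a N \Po u = \sum_(i < N) a i *: u ^+ qpow i.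
Proof.
rewrite /linP; elim/big_rec2: _ => [|i y z _ <-]; first by rewrite comp_poly0.
by rewrite comp_polyD comp_polyZ comp_Xn_poly.
Qed.

Lemma lin_compD p u w : islin p -> p \Po (u + w) = (p \Po u) + (p \Po w).
Proof.
move=> /islinP[a [N ->]]; rewrite !comp_linP -big_split /=.
by apply: eq_bigr => i _; rewrite exprD_qpow_poly scalerDr.
Qed.

Lemma lin_comp0 p : islin p -> p \Po 0 = 0.
Proof. by move=> lin_p; rewrite comp_poly0r islin_coef0. Qed.

Lemma lin_compN p u : islin p -> p \Po (- u) = - (p \Po u).
Proof.
move=> lin_p; apply/eqP; rewrite -subr_eq0 opprK -lin_compD // addNr.
by rewrite lin_comp0.
Qed.

Lemma lin_compB p u w : islin p -> p \Po (u - w) = (p \Po u) - (p \Po w).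
Proof. by move=> lin_p; rewrite lin_compD // lin_compN. Qed.

Lemma islin_exp_qpow u j : islin u -> islin (u ^+ qpow j).
Proof.
move=> /islinP[a [N ->]]; rewrite /linP.
elim/big_rec: _ => [|i y _ lin_y].
  by rewrite expr0n gtn_eqF ?qpow_gt0 //; exact: islin0.
rewrite exprD_qpow_poly exprZn -exprM -qpowD.
by apply: islinD lin_y; apply/islinZ/islinXqpow.
Qed.

Lemma islin_comp p u : islin p -> islin u -> islin (p \Po u).
Proof.
move=> /islinP[a [N ->]] lin_u; rewrite comp_linP; apply: islin_sum => i _.
exact/islinZ/islin_exp_qpow.
Qed.

Definition has_qdeg p d := size p = (qpow d).+1.

Lemma has_qdeg_neq0 p d : has_qdeg p d -> p != 0.
Proof. by rewrite /has_qdeg -size_poly_gt0 => ->. Qed.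

Lemma lead_coef_has_qdeg p d : has_qdeg p d -> lead_coef p = p`_(qpow d).
Proof. by rewrite lead_coefE => ->. Qed.

Lemma has_qdeg_coef_neq0 p d : has_qdeg p d -> p`_(qpow d) != 0.
Proof. by move=> pd; rewrite -(lead_coef_has_qdeg pd) lead_coef_eq0 (has_qdeg_neq0 pd). Qed.

Lemma has_qdeg_coef_leq p d i : has_qdeg p d -> p`_(qpow i) != 0 -> (i <= d)%N.
Proof.
move=> pd nz; rewrite leqNgt; apply: contra nz => lt_di.
by rewrite nth_default // pd ltn_qpow.
Qed.

Lemma has_qdeg_inj p d e : has_qdeg p d -> has_qdeg p e -> d = e.
Proof. by rewrite /has_qdeg => -> [/qpow_inj]. Qed.

Lemma has_qdegZ c p d : c != 0 -> has_qdeg p d -> has_qdeg (c *: p) d.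
Proof. by move=> nz_c; rewrite /has_qdeg size_scale. Qed.

Lemma lin_has_qdeg p : islin p -> p != 0 -> exists d, has_qdeg p d.
Proof.
move=> lin_p nz_p; have := nz_p; rewrite -lead_coef_eq0 lead_coefE => /lin_p[d d_eq].
by exists d; rewrite /has_qdeg -d_eq polySpred.
Qed.

Lemma has_qdeg_qdeg p d : has_qdeg p d -> qdeg p = Some d.
Proof.
move=> pd; rewrite /qdeg (negPf (has_qdeg_neq0 pd)); congr Some.
have d_lt : (d < size p)%N by rewrite pd ltnS ltnW // ltn_qpow_self.
apply/eqP; rewrite eqn_leq; apply/andP; split.
  by apply/bigmax_leqP => i; apply: has_qdeg_coef_leq pd.
apply: (@leq_bigmax_cond _ _ (fun i : 'I_(size p) => val i) (Ordinal d_lt)).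
exact: has_qdeg_coef_neq0.
Qed.

Lemma qdeg_has_qdeg p d : islin p -> qdeg p = Some d -> has_qdeg p d.
Proof.
move=> lin_p; have [->|nz_p] := eqVneq p 0; first by rewrite /qdeg eqxx.
by have [e pe] := lin_has_qdeg lin_p nz_p; rewrite (has_qdeg_qdeg pe) => -[<-].
Qed.

Lemma has_qdeg_comp p u a b :
  has_qdeg p a -> has_qdeg u b -> has_qdeg (p \Po u) (a + b).
Proof.
move=> pa ub; have nz : p \Po u != 0.
  by rewrite comp_poly_eq0 ?ub ?ltnS ?qpow_gt0 ?(has_qdeg_neq0 pa).
by rewrite /has_qdeg polySpred // size_comp_poly pa ub /= qpowD.
Qed.

Lemma lead_coef_lin_comp p u a :
  has_qdeg p a -> islin u -> u != 0 ->
  lead_coef (p \Po u) = lead_coef p * lead_coef u ^+ qpow a.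
Proof.
move=> pa lin_u nz_u; rewrite lead_coef_comp ?pa //.
by have [b ->] := lin_has_qdeg lin_u nz_u; rewrite ltnS qpow_gt0.
Qed.

Lemma lin_qdegP p : islin p -> p = 0 \/ exists d, has_qdeg p d.
Proof. by move=> lin_p; have [|/(lin_has_qdeg lin_p)] := eqVneq p 0; [left | right]. Qed.

Lemma qdeg_lt0 N : qdeg_lt (0 : {poly L}) N.
Proof. by rewrite /qdeg_lt /qdeg eqxx. Qed.

Lemma has_qdeg_lt p d N : has_qdeg p d -> qdeg_lt p N = (d < N)%N.
Proof. by move=> pd; rewrite /qdeg_lt (has_qdeg_qdeg pd). Qed.

Lemma lin_qdeg_ltP p N : islin p ->
  qdeg_lt p N <-> p = 0 \/ exists2 d, has_qdeg p d & (d < N)%N.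
Proof.
move=> /lin_qdegP[->|[d pd]]; first by split=> _; [left | exact: qdeg_lt0].
rewrite (has_qdeg_lt _ pd); split=> [lt_dN|[p0|[e pe]]]; [by right; exists d | |].
  by have := has_qdeg_neq0 pd; rewrite p0 eqxx.
by rewrite (has_qdeg_inj pd pe).
Qed.

Lemma qdeg_lt_leq p a b : qdeg_lt p a -> (a <= b)%N -> qdeg_lt p b.
Proof. by rewrite /qdeg_lt; case: qdeg => // d lt_da /(leq_trans lt_da). Qed.

Lemma qdegN p : qdeg (- p) = qdeg p.
Proof.
rewrite /qdeg oppr_eq0 size_polyN; case: eqP => // _; congr Some.
by apply: eq_bigl => i; rewrite /qcoef_nz coefN oppr_eq0.
Qed.

Lemma qdeg_ltN p N : qdeg_lt (- p) N = qdeg_lt p N.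
Proof. by rewrite /qdeg_lt qdegN. Qed.

Lemma qdegZ c p : c != 0 -> qdeg (c *: p) = qdeg p.
Proof.
move=> nz_c; rewrite /qdeg scaler_eq0 (negPf nz_c) size_scale //; case: eqP => // _.
by congr Some; apply: eq_bigl => i; rewrite /qcoef_nz coefZ mulf_eq0 (negPf nz_c).
Qed.

Lemma qdeg_ltZ c p N : c != 0 -> qdeg_lt (c *: p) N = qdeg_lt p N.
Proof. by move=> nz_c; rewrite /qdeg_lt qdegZ. Qed.

Lemma qdeg_le_lt p a b c :
  qdeg_le p (a%:Z - b%:Z + c%:Z) <-> qdeg_lt p ((a + c).+1 - b).
Proof. by rewrite /qdeg_le /qdeg_lt; case: qdeg => // e; split; lia. Qed.

Lemma has_qdegDl p u d : islin u -> has_qdeg p d -> qdeg_lt u d -> has_qdeg (p + u) d.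
Proof.
move=> lin_u pd /(lin_qdeg_ltP _ lin_u)[->|[e ue lt_ed]]; first by rewrite addr0.
by rewrite /has_qdeg size_polyDl pd // ue ltnS ltn_qpow.
Qed.

Lemma qdeg_ltD p u N :
  islin p -> islin u -> qdeg_lt p N -> qdeg_lt u N -> qdeg_lt (p + u) N.
Proof.
move=> lin_p lin_u /(lin_qdeg_ltP _ lin_p) pN /(lin_qdeg_ltP _ lin_u) uN.
have [->|[e pue]] := lin_qdegP (islinD lin_p lin_u); first exact: qdeg_lt0.
have size_le v : v = 0 \/ (exists2 d, has_qdeg v d & (d < N)%N) -> (size v <= qpow N)%N.
  by case=> [->|[d -> lt_dN]]; rewrite ?size_poly0 // ltn_qpow.
rewrite (has_qdeg_lt _ pue) -ltn_qpow -pue.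
by rewrite (leq_trans (size_polyD _ _)) // geq_max !size_le.
Qed.

Lemma qdeg_lt_comp p u a b :
  islin p -> islin u -> qdeg_lt p a.+1 -> qdeg_lt u b.+1 -> qdeg_lt (p \Po u) (a + b).+1.
Proof.
move=> lin_p lin_u /(lin_qdeg_ltP _ lin_p)[->|[d pd lt_da]].
  by move=> _; rewrite comp_poly0; apply: qdeg_lt0.
move=> /(lin_qdeg_ltP _ lin_u)[->|[e ue lt_eb]]; first by rewrite lin_comp0 //; apply: qdeg_lt0.
by rewrite (has_qdeg_lt _ (has_qdeg_comp pd ue)) ltnS leq_add.
Qed.

Lemma qdeg_lt_comp_cancel h m a b :
  has_qdeg h a -> islin m -> qdeg_lt (h \Po m) (a + b) -> qdeg_lt m b.
Proof.
move=> ha lin_m; have [->|[d md]] := lin_qdegP lin_m; first by move=> _; apply: qdeg_lt0.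
by rewrite (has_qdeg_lt _ md) (has_qdeg_lt _ (has_qdeg_comp ha md)) ltn_add2l.
Qed.

Lemma size_poly_gt_card_vspace P (W : {vspace L}) :
  P != 0 -> {in W, forall v, root P v} -> (q ^ \dim W < size P)%N.
Proof.
move=> nz_P rootW; pose LT := finvect_type L.
rewrite -(card_vspace (W : {vspace LT})) cardE.
apply: (max_poly_roots nz_P); last exact: enum_uniq.
by apply/allP => v; rewrite (@mem_enum LT); apply: rootW.
Qed.

Lemma lin_dim_roots_leq P d (W : {vspace L}) :
  has_qdeg P d -> {in W, forall v, root P v} -> (\dim W <= d)%N.
Proof.
move=> Pd rootW; have := size_poly_gt_card_vspace (has_qdeg_neq0 Pd) rootW.
by rewrite Pd ltnS leq_exp2l // q_gt1.
Qed.

Lemma lin_root_span P s :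
  islin P -> {in s, forall x, root P x} -> {in <<s>>%VS, forall v, root P v}.
Proof.
move=> lin_P rootS v; rewrite -[s]/(val (in_tuple s)) => /coord_span ->.
rewrite /root lin_horner_sum // big1 // => i _; rewrite lin_hornerZ //.
by have /eqP -> := rootS _ (mem_nth 0 (ltn_ord i)); rewrite scaler0.
Qed.

Definition is_annihilator (W : {vspace L}) P :=
  [/\ islin P, has_qdeg P (\dim W), lead_coef P = 1 & {in W, forall v, root P v}].

Lemma annihilator_span_exists s : free s -> exists P, is_annihilator <<s>> P.
Proof.
elim: s => [_|w s IH].
  exists 'X; split; rewrite ?span_nil ?dimv0 ?lead_coefX //; first exact: islinX.
    by rewrite /has_qdeg size_polyX.
  by move=> v; rewrite memv0 => /eqP ->; rewrite rootE hornerX.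
move=> free_ws; have free_s : free s by move: free_ws; rewrite free_cons => /andP[].
have [A [lin_A A_deg lcA rootA]] := IH free_s.
have dim_ws : \dim <<w :: s>> = (\dim <<s>>).+1.
  by rewrite (eqnP free_s); apply/eqnP.
set a := A.[w].
have nz_a : a != 0.
  apply/negP => /eqP Aw0.
  suff : (\dim <<w :: s>> <= \dim <<s>>)%N by rewrite dim_ws ltnn.
  apply: lin_dim_roots_leq A_deg _; apply: lin_root_span lin_A _ => x.
  rewrite inE => /orP[/eqP ->|x_s]; first by rewrite /root -/a Aw0.
  exact/rootA/memv_span.
(* B = x^[1] - a^(q-1) x vanishes on F_q a, the image of F_q w under A. *)
pose B : {poly L} := 'X^(qpow 1) - (a ^+ q.-1) *: 'X^(qpow 0).
have lt_B : (size ((a ^+ q.-1) *: 'X^(qpow 0) : {poly L}) < size ('X^(qpow 1) : {poly L}))%N.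
  by rewrite (leq_ltn_trans (size_scale_leq _ _)) // !size_polyXn ltnS ltn_qpow.
have B_deg : has_qdeg B 1.
  by rewrite /has_qdeg size_polyDl ?size_polyN // size_polyXn.
exists (B \Po A); split.
- by apply: islin_comp => //; apply: islinB; [|apply: islinZ]; apply: islinXqpow.
- by rewrite dim_ws -add1n; apply: has_qdeg_comp.
- rewrite (lead_coef_lin_comp B_deg lin_A) ?lcA ?expr1n ?mulr1 ?(has_qdeg_neq0 A_deg) //.
  by rewrite lead_coefDl ?lead_coefXn // size_polyN.
move=> v; rewrite span_cons => /memv_addP[_ /vlineP[c ->] [z z_s ->]].
rewrite /root horner_comp lin_hornerD // lin_hornerZ // -/a (eqP (rootA z z_s)) addr0.
rewrite /B !hornerE exprZn expr_qpow_scalar -scalerAr -exprSr prednK ?(ltnW q_gt1) //.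
by rewrite /qpow expn1 subrr.
Qed.

Lemma annihilator_exists (W : {vspace L}) : exists P, is_annihilator W P.
Proof.
have := annihilator_span_exists (basis_free (vbasisP W)).
by rewrite (span_basis (vbasisP W)).
Qed.

Lemma lin_rdivp_annihilator (W : {vspace L}) P h :
  is_annihilator W P -> islin h -> {in W, forall v, root h v} ->
  exists2 b, islin b & h = b \Po P.
Proof.
move=> [lin_P P_deg lcP rootP].
elim: (size h).+1 {-2}h (ltnSn (size h)) => // N IH {}h lt_hN lin_h root_h.
have [->|nz_h] := eqVneq h 0; first by exists 0; rewrite ?comp_poly0 //; apply: islin0.
have [e h_deg] := lin_has_qdeg lin_h nz_h.
have le_dim_e : (\dim W <= e)%N := lin_dim_roots_leq h_deg root_h.
pose M : {poly L} := lead_coef h *: 'X^(qpow (e - \dim W)).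
have nz_lc : lead_coef h != 0 by rewrite lead_coef_eq0.
have M_deg : has_qdeg M (e - \dim W) by rewrite /has_qdeg size_scale // size_polyXn.
have lin_M : islin M by apply/islinZ/islinXqpow.
have MP_deg : has_qdeg (M \Po P) e by rewrite -(subnK le_dim_e); apply: has_qdeg_comp.
have lcMP : lead_coef (M \Po P) = lead_coef h.
  rewrite (lead_coef_lin_comp M_deg lin_P) ?(has_qdeg_neq0 P_deg) //.
  by rewrite lcP expr1n mulr1 lead_coefZ lead_coefXn mulr1.
have [b lin_b hMP] : exists2 b, islin b & h - (M \Po P) = b \Po P.
  apply: IH; [|exact: islinB lin_h (islin_comp lin_M lin_P)|].
    rewrite -ltnS; apply: leq_trans lt_hN; rewrite ltnS h_deg ltnS.
    apply/leq_sizeP => j.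
    rewrite leq_eqVlt => /orP[/eqP <-|lt_j]; last first.
      by rewrite coefB !nth_default ?subrr ?MP_deg ?h_deg.
    by rewrite coefB -(lead_coef_has_qdeg h_deg) -(lead_coef_has_qdeg MP_deg) lcMP subrr.
  move=> v vW; rewrite /root hornerD hornerN horner_comp.
  by rewrite (eqP (root_h v vW)) (eqP (rootP v vW)) lin_horner0 // subrr.
by exists (b + M); [apply: islinD | rewrite comp_polyD -hMP subrK].
Qed.

Lemma widen_ord_lift_max n (i : 'I_n) : widen_ord (leqnSn n) i = lift ord_max i.
Proof. by apply: val_inj; rewrite [RHS]lift_max. Qed.

Lemma islin_det_col_lin m (D : 'M[{poly L}]_m) (j0 : 'I_m) :
  (forall a, islin (D a j0)) ->
  (forall a l, l != j0 -> D a l = ((D a l)`_0)%:P) -> islin (\det D).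
Proof.
move=> lin_col const_D; rewrite (expand_det_col _ j0); apply: islin_sum => a _.
set C := row' a (col' j0 D).
have const_C : C = map_mx polyC (\matrix_(x, y) (C x y)`_0).
  by apply/matrixP => x y; rewrite !mxE /C; apply: const_D; rewrite eq_sym neq_lift.
rewrite /cofactor -/C const_C det_map_mx /= -polyCN -polyC_exp -polyCM mulrC mul_polyC.
exact: islinZ.
Qed.

Lemma moore_x_lt n (g : 'I_n -> L) a (c : 'I_n.+1) (lt_cn : (c < n)%N) :
  moore_x g a c = (g (Ordinal lt_cn) ^+ qpow a)%:P.
Proof. by rewrite mxE insubT. Qed.

Lemma moore_x_max n (g : 'I_n -> L) a : moore_x g a ord_max = 'X^(qpow a).
Proof. by rewrite mxE insubN //= ltnn. Qed.

Lemma islin_Lambda n (g r : 'I_n -> L) : islin (Lambda g r).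
Proof.
apply: islin_sum => i _; rewrite mul_polyC; apply: islinZ.
case: n g r i => [|n] g r i; first by case: i.
apply: (islin_det_col_lin (j0 := ord_max)) => [a|a l ne_l]; rewrite mxE.
  rewrite (_ : lift _ _ = ord_max) ?moore_x_max; first exact: islinXqpow.
  by apply: val_inj; rewrite /= /bump -ltnS ltn_ord.
have lt_l : (lift (widen_ord (leqnSn n.+1) i) l < n.+1)%N.
  have lt_ln : (l < n)%N by rewrite ltn_neqAle -ltnS ltn_ord andbT.
  by rewrite /= /bump; apply: leq_ltn_trans (leq_add (leq_b1 _) (leqnn l)) _.
by rewrite (moore_x_lt _ _ lt_l) coefC.
Qed.

Section Interpolation.
Variables (n : nat) (g r : 'I_n -> L).
Hypothesis free_g : free [seq g i | i <- enum 'I_n].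

Local Notation G := <<[seq g i | i <- enum 'I_n]>>%VS.

Lemma g_in_span i : g i \in G.
Proof. by apply/memv_span/map_f; rewrite mem_enum. Qed.

Lemma combination_inj :
  injective (fun c : {ffun 'I_n -> F} => \sum_(i < n) c i *: g i).
Proof.
move=> c c' /= eq_cc'; apply/ffunP => i; apply/eqP; rewrite -subr_eq0; apply/eqP.
move: i; apply: (freeP (X := [tuple g i | i < n]) free_g).
rewrite (eq_bigr (fun i => c i *: g i - c' i *: g i)) ?sumrB ?eq_cc' ?subrr //.
by move=> j _; rewrite nth_mktuple scalerBl.
Qed.

Lemma Pi_g_annihilator : is_annihilator G (Pi_g g).
Proof.
have [P [lin_P P_deg lcP rootP]] := annihilator_exists G.
pose rs := [seq \sum_(i < n) c i *: g i | c : {ffun 'I_n -> F} <- enum {ffun 'I_n -> F}].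
suff -> : Pi_g g = P by [].
rewrite /Pi_g -big_enum -(big_map _ xpredT (fun z => 'X - z%:P)) -/rs.
rewrite [P](all_roots_prod_XsubC (rs := rs)) ?lcP ?scale1r //.
- rewrite P_deg size_map -cardE card_ffun card_ord (eqnP free_g).
  by rewrite size_map size_enum_ord.
- apply/allP => z /mapP [c _ ->]; apply: rootP; apply: memv_suml => i _.
  exact/memvZ/g_in_span.
- by rewrite uniq_rootsE map_inj_uniq ?enum_uniq //; apply: combination_inj.
Qed.

Lemma det_moore_neq0 : \det (moore n g) != 0.
Proof.
(* A left kernel vector v gives sum_a v_a x^[a], of q-degree < n, vanishing on G. *)
apply/negP => /det0P [v nz_v v_ker].
pose p : {poly L} := \sum_(a < n) v 0 a *: 'X^(qpow a).
have lin_p : islin p by apply: islin_sum => a _; apply/islinZ/islinXqpow.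
have coef_p (a : 'I_n) : p`_(qpow a) = v 0 a.
  rewrite coef_sum (bigD1 a) //= coefZ coefXn eqxx mulr1 big1 ?addr0 // => b ne_ba.
  rewrite coefZ coefXn; case: eqP => [/qpow_inj ab|]; last by rewrite mulr0.
  by case/eqP: ne_ba; apply: val_inj.
have nz_p : p != 0.
  by apply: contra nz_v => /eqP p0; apply/eqP/rowP => a; rewrite mxE -coef_p p0 coef0.
have root_p : {in G, forall x, root p x}.
  apply: lin_root_span lin_p _ => _ /mapP [l _ ->]; rewrite /root horner_sum.
  apply/eqP; transitivity ((v *m moore n g) 0 l); last by rewrite v_ker mxE.
  by rewrite mxE; apply: eq_bigr => a _; rewrite hornerZ hornerXn mxE.
have := size_poly_gt_card_vspace nz_p root_p; rewrite (eqnP free_g) size_map size_enum_ord.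
rewrite ltnNge; apply/negP/negPn/leq_sizeP => j le_qj.
rewrite coef_sum big1 // => a _; rewrite coefZ coefXn.
by case: eqP => [ja|]; [move: le_qj; rewrite ja leqNgt ltn_qpow ltn_ord | rewrite mulr0].
Qed.

Definition moore_at x : 'M[L]_(n, n.+1) := map_mx (horner_eval x) (moore_x g).

Lemma moore_at_lift x a l : moore_at x a (lift ord_max l) = g l ^+ qpow a.
Proof.
have lt_l : (lift ord_max l < n)%N by rewrite lift_max.
rewrite mxE (moore_x_lt _ _ lt_l) horner_evalE hornerC.
by congr (g _ ^+ _); apply: val_inj; exact: lift_max.
Qed.

Lemma moore_at_max x a : moore_at x a ord_max = x ^+ qpow a.
Proof. by rewrite mxE moore_x_max horner_evalE hornerXn. Qed.

(* The Moore matrix of (g, x) bordered below by the row (r, 0). *)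
Definition bordered_moore x : 'M[L]_n.+1 := \matrix_(a, l)
  if unlift ord_max a is Some a' then moore_at x a' l
  else if unlift ord_max l is Some l' then r l' else 0.

Lemma bordered_moore_lift x a l : bordered_moore x (lift ord_max a) l = moore_at x a l.
Proof. by rewrite mxE liftK. Qed.

Lemma bordered_moore_max x l : bordered_moore x ord_max (lift ord_max l) = r l.
Proof. by rewrite mxE unlift_none liftK. Qed.

Lemma bordered_moore_max_max x : bordered_moore x ord_max ord_max = 0.
Proof. by rewrite mxE unlift_none. Qed.

Lemma horner_Lambda x :
  (Lambda g r).[x] = - \det (bordered_moore x) / \det (moore n g).
Proof.
rewrite (expand_det_row _ ord_max) big_ord_recr /= bordered_moore_max_max mul0r addr0.
rewrite /Lambda horner_sum -sumrN mulr_suml; apply: eq_bigr => i _.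
rewrite hornerM hornerC -horner_evalE -det_map_mx widen_ord_lift_max.
rewrite bordered_moore_max /cofactor lift_max.
have -> : row' ord_max (col' (lift ord_max i) (bordered_moore x))
          = map_mx (horner_eval x) (col' (lift ord_max i) (moore_x g)) :> 'M_n.
  by apply/matrixP => a b; rewrite !mxE liftK /moore_at !mxE.
have sign : (-1) ^+ (n + i) = - (-1) ^+ (n - i.+1) :> L.
  rewrite -signr_odd -[(-1) ^+ (n - i.+1)]signr_odd -{1}(subnK (ltn_ord i)).
  by rewrite -addnA oddD addSn oddS oddD addbb; case: odd; rewrite ?expr1 ?opprK.
rewrite sign; ring.
Qed.

(* At x = g j the last column agrees with column j except for the entry r j. *)
Lemma det_bordered_moore_g j : \det (bordered_moore (g j)) = - r j * \det (moore n g).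
Proof.
set N := bordered_moore (g j); set c := lift ord_max j.
have c_neq_max : c != ord_max by rewrite eq_sym neq_lift.
pose N' : 'M[L]_n.+1 := \matrix_(a, l) N a (if l == ord_max then c else l).
have det_N' : \det N' = 0.
  rewrite -det_tr; apply: (determinant_alternate (i1 := ord_max) (i2 := c)).
    by rewrite eq_sym.
  by move=> b; rewrite !mxE eqxx (negPf c_neq_max).
have cofactor_N' a : cofactor N' a ord_max = cofactor N a ord_max.
  rewrite /cofactor; congr (_ * \det _).
  by apply/matrixP => y z; rewrite !mxE eq_sym (negPf (neq_lift _ _)).
rewrite -[\det N]subr0 -det_N' (expand_det_col N ord_max) (expand_det_col N' ord_max).
rewrite -sumrB big_ord_recr /= big1 ?add0r => [|a _]; last first.
  rewrite cofactor_N' -mulrBl [N' _ _]mxE eqxx widen_ord_lift_max /N !bordered_moore_lift.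
  by rewrite moore_at_lift moore_at_max subrr mul0r.
rewrite cofactor_N' -mulrBl [N' _ _]mxE eqxx /N bordered_moore_max bordered_moore_max_max add0r.
rewrite /cofactor -signr_odd addnn odd_double expr0 mul1r.
congr (_ * \det _); apply/matrixP => a b.
by rewrite [LHS]mxE [LHS]mxE /N bordered_moore_lift moore_at_lift mxE.
Qed.

Lemma horner_Lambda_g j : (Lambda g r).[g j] = r j.
Proof.
rewrite horner_Lambda det_bordered_moore_g !mulNr opprK mulrK //.
by rewrite unitfE det_moore_neq0.
Qed.

End Interpolation.

Local Notation coords v := (\row_i coord (vbasis (@fullv F L)) i v).

Lemma mxrank_coord_free t (B : t.-tuple L) :
  free B -> \rank (\matrix_(l < t) coords B`_l) = t.
Proof.
move=> free_B; apply/eqP; rewrite -[_ == t]/(row_free _) -kermx_eq0.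
apply/rowV0P => v /sub_kermxP vB0.
apply/rowP => l; rewrite mxE; move: l; apply: (freeP free_B).
rewrite [LHS](coord_vbasis (memvf _)); apply: big1 => i _.
have := congr1 (fun M : 'M_(1, _) => M 0 i) vB0; rewrite !mxE => sum0.
rewrite linear_sum /= -[RHS](scale0r (vbasis fullv)`_i); congr (_ *: _).
by apply: etrans sum0; apply: eq_bigr => l _; rewrite linearZ /= !mxE.
Qed.

Lemma mxrank_coord_span n (v : 'I_n -> L) :
  \rank (\matrix_(i < \dim (@fullv F L), j < n) coord (vbasis fullv) i (v j))
  = \dim <<[seq v j | j <- enum 'I_n]>>%VS.
Proof.
set W := <<_>>%VS; set A := \matrix_(i, j) _.
set B := vbasis W; have basis_B := vbasisP W.
pose X := [tuple v j | j < n].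
have B_W (l : 'I_(\dim W)) : B`_l \in W.
  have : B`_l \in <<B>>%VS by rewrite memv_span ?mem_nth ?size_tuple.
  by rewrite (span_basis basis_B).
pose BT := \matrix_(l < \dim W) coords B`_l.
have rank_BT : \rank BT = \dim W := mxrank_coord_free (basis_free basis_B).
pose C : 'M[F]_(n, \dim W) := \matrix_(j, l) coord B l (v j).
pose D : 'M[F]_(\dim W, n) := \matrix_(l, j) coord X j B`_l.
have AT_eq : A^T = C *m BT.
  apply/matrixP => j i; rewrite !mxE.
  have v_W : v j \in W by apply/memv_span/map_f; rewrite mem_enum.
  rewrite {1}(coord_vbasis v_W) linear_sum /=; apply: eq_bigr => l _.
  by rewrite linearZ /= !mxE.
have BT_eq : BT = D *m A^T.
  apply/matrixP => l i; rewrite !mxE {1}(@coord_span _ _ _ X _ (B_W l)) linear_sum /=.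
  by apply: eq_bigr => j _; rewrite linearZ /= !mxE nth_mktuple.
have le_AT : (\rank A^T <= \dim W)%N by rewrite AT_eq -[X in (_ <= X)%N]rank_BT mxrankM_maxr.
have ge_AT : (\dim W <= \rank A^T)%N by rewrite -[X in (X <= _)%N]rank_BT BT_eq mxrankM_maxr.
by rewrite -[\rank A]mxrank_tr; apply/eqP; rewrite eqn_leq le_AT ge_AT.
Qed.

Definition error_span n (g r : 'I_n -> L) m : {vspace L} :=
  <<[seq codeword g m j - r j | j <- enum 'I_n]>>.

Lemma rank_dist_error_span n (g r : 'I_n -> L) m :
  rank_dist (codeword g m) r = \dim (error_span g r m).
Proof. exact: mxrank_coord_span. Qed.

Section Module.
Variables (n : nat) (g r : 'I_n -> L).
Hypothesis free_g : free [seq g i | i <- enum 'I_n].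

Lemma inM_iff f : inM g r f <->
  islin f.2 /\ exists2 b, islin b & f.1 + (f.2 \Po Lambda g r) = b \Po Pi_g g.
Proof.
case: f => f1 f2 /=; split=> [[b [h [lin_b [lin_h [-> ->]]]]] | [lin_f2 [b lin_b f_eq]]].
  rewrite lin_comp0 // comp_polyXr add0r; split=> //; exists b => //.
  by rewrite lin_compN // addrNK.
exists b, f2; do 2!split=> //; rewrite /padd /lact /= lin_comp0 // comp_polyXr add0r.
by rewrite lin_compN // -f_eq addrK.
Qed.

Lemma islin_inM f : inM g r f -> islin f.1 /\ islin f.2.
Proof.
move=> /inM_iff[lin_f2 [b lin_b f_eq]]; split=> //.
rewrite -(addrK (f.2 \Po Lambda g r) f.1) f_eq.
have [lin_Pi _ _ _] := Pi_g_annihilator free_g.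
by apply: islinB; apply: islin_comp => //; apply: islin_Lambda.
Qed.

Lemma root_error_span h m :
  islin m -> inM g r (- (h \Po m), h) -> {in error_span g r m, forall v, root h v}.
Proof.
move=> lin_m /inM_iff[lin_h [b lin_b h_eq]]; rewrite /= in lin_h h_eq.
apply: (lin_root_span lin_h).
move=> _ /mapP[j _ ->]; have [_ _ _ root_Pi] := Pi_g_annihilator free_g.
have /(congr1 (horner^~ (g j))) := h_eq.
rewrite hornerD hornerN !horner_comp horner_Lambda_g // (eqP (root_Pi _ (g_in_span g j))).
rewrite lin_horner0 // /root /codeword lin_hornerB // => sum0.
by rewrite -opprB addrC sum0 oppr0.
Qed.

Lemma error_locator_inM m : islin m ->
  exists h, is_annihilator (error_span g r m) h /\ inM g r (- (h \Po m), h).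
Proof.
move=> lin_m; have [h [lin_h h_deg lc_h root_h]] := annihilator_exists (error_span g r m).
exists h; split=> //; apply/inM_iff; split=> //=.
have lin_hL := islin_comp lin_h (islinB (@islin_Lambda _ g r) lin_m).
have root_hL : {in <<[seq g i | i <- enum 'I_n]>>%VS,
    forall v, root (h \Po (Lambda g r - m)) v}.
  apply: (lin_root_span lin_hL) => _ /mapP[j _ ->].
  rewrite /root horner_comp hornerD hornerN horner_Lambda_g //.
  have : m.[g j] - r j \in error_span g r m by apply/memv_span/map_f; rewrite mem_enum.
  by move=> /root_h; rewrite /root -[r j - _]opprB lin_hornerN // oppr_eq0.
have [b lin_b hL_eq] := lin_rdivp_annihilator (Pi_g_annihilator free_g) lin_hL root_hL.
by exists b; rewrite // -hL_eq lin_compB // addrC.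
Qed.

Lemma inM_generators b1 b2 :
  (forall f, inM g r f <-> exists beta gamma,
     islin beta /\ islin gamma /\ f = padd (lact beta b1) (lact gamma b2)) ->
  inM g r b1 /\ inM g r b2.
Proof.
move=> gen; split; [apply/(gen b1); exists 'X, 0 | apply/(gen b2); exists 0, 'X].
  split; [exact: islinX | split; first exact: islin0].
  by rewrite /padd /lact /= !comp_polyX !comp_poly0 !addr0 -surjective_pairing.
split; [exact: islin0 | split; first exact: islinX].
by rewrite /padd /lact /= !comp_polyX !comp_poly0 !add0r -surjective_pairing.
Qed.

Lemma exists_min_error_span k : exists2 m0, islin m0 /\ qdeg_lt m0 k &
  forall m, islin m -> qdeg_lt m k -> (\dim (error_span g r m0) <= \dim (error_span g r m))%N.
Proof.
pose P t := exists2 m, islin m /\ qdeg_lt m k & \dim (error_span g r m) = t.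
have [_ [m0 m0_ok <-] m0_min] : exists2 t, P t & forall t', P t' -> (t <= t')%N.
  apply: classic_ex_minn; exists (\dim (error_span g r 0)); exists 0 => //.
  by split; [exact: islin0 | exact: qdeg_lt0].
by exists m0 => // m lin_m m_deg; apply: m0_min; exists m.
Qed.

End Module.

Section LeadingPosition.
Variable k : nat.
Implicit Type b : pair L.

Lemma lpos1_qdeg b : islin b.1 -> islin b.2 -> lpos k b 1 ->
  exists i, has_qdeg b.1 i /\ qdeg_lt b.2 (i - (k - 1)).
Proof.
move=> lin_b1 lin_b2 [i [c [_ [nz_c [coef_c lead]]]]].
have nz_ci : b.1`_(qpow i) != 0 by rewrite -[b.1`_ _]/(coefm b i 1) coef_c.
have [d b1_d] : exists d, has_qdeg b.1 d.
  by apply: lin_has_qdeg lin_b1 _; apply: contraNneq nz_ci => ->; rewrite coef0.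
have d_eq : d = i.
  have := lead d 1%N (or_introl (eqxx _)) (has_qdeg_coef_neq0 b1_d).
  case=> [[-> _] //|]; rewrite /mono_lt /wt /= !addn0 ltnn andbF orbF => lt_di.
  by move: (has_qdeg_coef_leq b1_d nz_ci); rewrite leqNgt lt_di.
exists i; split; first by rewrite -d_eq.
have [->|[e b2_e]] := lin_qdegP lin_b2; first exact: qdeg_lt0.
have := lead e 2%N (or_intror (eqxx _)) (has_qdeg_coef_neq0 b2_e).
rewrite (has_qdeg_lt _ b2_e); case=> [[_ //]|].
by rewrite /mono_lt /wt /= addn0 andbF orbF; lia.
Qed.

Lemma lpos2_qdeg b : islin b.1 -> islin b.2 -> lpos k b 2 ->
  exists i, has_qdeg b.2 i /\ qdeg_lt b.1 (i + (k - 1)).+1.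
Proof.
move=> lin_b1 lin_b2 [i [c [_ [nz_c [coef_c lead]]]]].
have nz_ci : b.2`_(qpow i) != 0 by rewrite -[b.2`_ _]/(coefm b i 2) coef_c.
have [d b2_d] : exists d, has_qdeg b.2 d.
  by apply: lin_has_qdeg lin_b2 _; apply: contraNneq nz_ci => ->; rewrite coef0.
have d_eq : d = i.
  have := lead d 2%N (or_intror (eqxx _)) (has_qdeg_coef_neq0 b2_d).
  case=> [[-> _] //|]; rewrite /mono_lt /wt /= ltn_add2r ltnn andbF orbF => lt_di.
  by move: (has_qdeg_coef_leq b2_d nz_ci); rewrite leqNgt lt_di.
exists i; split; first by rewrite -d_eq.
have [->|[e b1_e]] := lin_qdegP lin_b1; first exact: qdeg_lt0.
have := lead e 1%N (or_introl (eqxx _)) (has_qdeg_coef_neq0 b1_e).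
rewrite (has_qdeg_lt _ b1_e) ltnS; case=> [[_ //]|].
by rewrite /mono_lt /wt /= addn0 andbT => /orP[/ltnW|/eqP ->].
Qed.

Lemma wdeg_lpos1 b i :
  islin b.2 -> has_qdeg b.1 i -> qdeg_lt b.2 (i - (k - 1)) -> wdeg k b = Some i.
Proof.
move=> lin_b2 b1_i; rewrite /wdeg (has_qdeg_qdeg b1_i).
move=> /(lin_qdeg_ltP _ lin_b2)[->|[d b2_d lt_d]]; first by rewrite /qdeg eqxx.
by rewrite (has_qdeg_qdeg b2_d); congr Some; apply/maxn_idPl; lia.
Qed.

Lemma wdeg_lpos2 b i :
  islin b.1 -> has_qdeg b.2 i -> qdeg_lt b.1 (i + (k - 1)).+1 ->
  wdeg k b = Some (i + (k - 1))%N.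
Proof.
move=> lin_b1 b2_i; rewrite /wdeg (has_qdeg_qdeg b2_i).
move=> /(lin_qdeg_ltP _ lin_b1)[->|[d b1_d le_d]]; first by rewrite /qdeg eqxx.
by rewrite (has_qdeg_qdeg b1_d); congr Some; apply/maxn_idPr; lia.
Qed.

End LeadingPosition.

Section PredictableDegree.
Variables (k : nat) (b1 b2 : pair L) (i1 i2 : nat).
Hypotheses (lin_b11 : islin b1.1) (lin_b12 : islin b1.2).
Hypotheses (lin_b21 : islin b2.1) (lin_b22 : islin b2.2).
Hypotheses (b11_deg : has_qdeg b1.1 i1) (b12_deg : qdeg_lt b1.2 (i1 - (k - 1))).
Hypotheses (b22_deg : has_qdeg b2.2 i2) (b21_deg : qdeg_lt b2.1 (i2 + (k - 1)).+1).

Local Notation comb beta gamma := (padd (lact beta b1) (lact gamma b2)).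

Lemma comb_lpos2 beta gamma c :
  islin beta -> islin gamma -> has_qdeg gamma c ->
  qdeg_lt beta ((c + i2 + (k - 1)).+1 - i1) ->
  has_qdeg (comb beta gamma).2 (c + i2) /\
  qdeg_lt (comb beta gamma).1 (c + i2 + (k - 1)).+1.
Proof.
move=> lin_beta lin_gamma gamma_c /(lin_qdeg_ltP _ lin_beta) beta_deg; split=> /=.
  rewrite addrC; apply: has_qdegDl; [exact: islin_comp | exact: has_qdeg_comp |].
  case: beta_deg => [->|[e beta_e lt_e]]; first by rewrite comp_poly0; apply: qdeg_lt0.
  move/(lin_qdeg_ltP _ lin_b12): b12_deg => [->|[d b12_d lt_d]].
    by rewrite lin_comp0 //; apply: qdeg_lt0.
  by rewrite (has_qdeg_lt _ (has_qdeg_comp beta_e b12_d)); lia.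
apply: qdeg_ltD; try exact: islin_comp.
  case: beta_deg => [->|[e beta_e lt_e]]; first by rewrite comp_poly0; apply: qdeg_lt0.
  by rewrite (has_qdeg_lt _ (has_qdeg_comp beta_e b11_deg)); lia.
rewrite -addnA; apply: qdeg_lt_comp => //.
by rewrite (has_qdeg_lt _ gamma_c).
Qed.

Lemma comb_lpos1 beta gamma e :
  islin beta -> islin gamma -> has_qdeg beta e ->
  qdeg_lt gamma (e + i1 - (i2 + (k - 1))) ->
  has_qdeg (comb beta gamma).1 (e + i1) /\
  qdeg_lt (comb beta gamma).2 (e + i1 - (k - 1)).
Proof.
move=> lin_beta lin_gamma beta_e /(lin_qdeg_ltP _ lin_gamma) gamma_deg; split=> /=.
  apply: has_qdegDl; [exact: islin_comp | exact: has_qdeg_comp |].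
  case: gamma_deg => [->|[c gamma_c lt_c]]; first by rewrite comp_poly0; apply: qdeg_lt0.
  move/(lin_qdeg_ltP _ lin_b21): b21_deg => [->|[d b21_d lt_d]].
    by rewrite lin_comp0 //; apply: qdeg_lt0.
  by rewrite (has_qdeg_lt _ (has_qdeg_comp gamma_c b21_d)); lia.
apply: qdeg_ltD; try exact: islin_comp.
  move/(lin_qdeg_ltP _ lin_b12): b12_deg => [->|[d b12_d lt_d]].
    by rewrite lin_comp0 //; apply: qdeg_lt0.
  by rewrite (has_qdeg_lt _ (has_qdeg_comp beta_e b12_d)); lia.
case: gamma_deg => [->|[c gamma_c lt_c]]; first by rewrite comp_poly0; apply: qdeg_lt0.
by rewrite (has_qdeg_lt _ (has_qdeg_comp gamma_c b22_deg)); lia.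
Qed.

Lemma comb_qdeg_lpos2 beta gamma t :
  islin beta -> islin gamma -> has_qdeg (comb beta gamma).2 t ->
  qdeg_lt (comb beta gamma).1 (t + (k - 1)).+1 ->
  exists2 c, has_qdeg gamma c &
    t = (c + i2)%N /\ qdeg_lt beta ((c + i2 + (k - 1)).+1 - i1).
Proof.
move=> lin_beta lin_gamma f2_t f1_deg.
have not_lpos1 e : has_qdeg beta e ->
    ~ qdeg_lt gamma (e + i1 - (i2 + (k - 1))).
  move=> beta_e /(comb_lpos1 lin_beta lin_gamma beta_e)[f1_e].
  rewrite (has_qdeg_lt _ f2_t); move: f1_deg; rewrite (has_qdeg_lt _ f1_e); lia.
have [c gamma_c] : exists c, has_qdeg gamma c.
  have [gamma0|//] := lin_qdegP lin_gamma.
  have [beta0|[e beta_e]] := lin_qdegP lin_beta.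
    by move: (has_qdeg_neq0 f2_t); rewrite beta0 gamma0 /= !comp_poly0 addr0 eqxx.
  by case: (not_lpos1 e beta_e); rewrite gamma0; apply: qdeg_lt0.
have beta_deg : qdeg_lt beta ((c + i2 + (k - 1)).+1 - i1).
  have [->|[e beta_e]] := lin_qdegP lin_beta; first exact: qdeg_lt0.
  rewrite (has_qdeg_lt _ beta_e); case: ltnP => // le_e.
  by case: (not_lpos1 e beta_e); rewrite (has_qdeg_lt _ gamma_c); lia.
have [f2_c _] := comb_lpos2 lin_beta lin_gamma gamma_c beta_deg.
by exists c => //; split; first exact: has_qdeg_inj f2_t f2_c.
Qed.

End PredictableDegree.

Section Decoding.
Variables (n k : nat) (g r : 'I_n -> L) (b1 b2 : pair L) (i1 i2 : nat).
Hypothesis k_gt0 : (0 < k)%N.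
Hypothesis free_g : free [seq g i | i <- enum 'I_n].
Hypothesis basis_gen : forall f, inM g r f <-> exists beta gamma,
  islin beta /\ islin gamma /\ f = padd (lact beta b1) (lact gamma b2).
Hypotheses (lin_b11 : islin b1.1) (lin_b12 : islin b1.2).
Hypotheses (lin_b21 : islin b2.1) (lin_b22 : islin b2.2).
Hypotheses (b11_deg : has_qdeg b1.1 i1) (b12_deg : qdeg_lt b1.2 (i1 - (k - 1))).
Hypotheses (b22_deg : has_qdeg b2.2 i2) (b21_deg : qdeg_lt b2.1 (i2 + (k - 1)).+1).

Local Notation step := (alg_step b1 b2 i1 (i2 + (k - 1))).
Local Notation E := (error_span g r).

Lemma alg_step_error_span j m : step j m ->
  [/\ islin m, qdeg_lt m k & (\dim (E m) <= j + i2)%N].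
Proof.
move=> [lin_m [beta [gamma [lin_beta [/qdeg_le_lt beta_deg [lin_gamma [_ [gamma_j]]]]]]]].
set f := padd _ _ => f_eq.
have gamma_deg := qdeg_has_qdeg lin_gamma gamma_j.
have [f2_deg f1_deg] : has_qdeg f.2 (j + i2) /\ qdeg_lt f.1 (j + i2 + (k - 1)).+1.
  apply: (comb_lpos2 (i1 := i1)) => //.
  by apply: qdeg_lt_leq beta_deg _; lia.
have f_inM : inM g r (- (f.2 \Po m), f.2).
  by rewrite -f_eq -surjective_pairing; apply/basis_gen; exists beta, gamma.
split=> //; last exact: lin_dim_roots_leq f2_deg (root_error_span free_g lin_m f_inM).
apply: (qdeg_lt_comp_cancel f2_deg lin_m); rewrite -qdeg_ltN -f_eq.
by apply: qdeg_lt_leq f1_deg _; lia.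
Qed.

Lemma alg_step_error_locator m : islin m -> qdeg_lt m k ->
  (i2 <= \dim (E m))%N /\ step (\dim (E m) - i2) m.
Proof.
move=> lin_m m_deg; set t := \dim (E m).
have [h [[lin_h h_deg _ _] /basis_gen h_comb]] := error_locator_inM r free_g lin_m.
have [beta [gamma [lin_beta [lin_gamma f_eq]]]] := h_comb.
have f1_deg : qdeg_lt (padd (lact beta b1) (lact gamma b2)).1 (t + (k - 1)).+1.
  rewrite -f_eq qdeg_ltN; apply: qdeg_lt_comp => //; first by rewrite (has_qdeg_lt _ h_deg).
  by rewrite subn1 prednK.
have f2_deg : has_qdeg (padd (lact beta b1) (lact gamma b2)).2 t by rewrite -f_eq.
have [c gamma_c [t_eq beta_deg]] :=
  comb_qdeg_lpos2 lin_b11 lin_b12 lin_b21 lin_b22 b11_deg b12_deg b22_deg b21_deg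
    lin_beta lin_gamma f2_deg f1_deg.
split; first by rewrite t_eq leq_addl.
rewrite t_eq addnK; split=> //.
have nz_lc : lead_coef gamma != 0 by rewrite lead_coef_eq0 (has_qdeg_neq0 gamma_c).
have nz_u : (lead_coef gamma)^-1 != 0 by rewrite invr_eq0.
exists ((lead_coef gamma)^-1 *: beta), ((lead_coef gamma)^-1 *: gamma).
have gamma'_c := has_qdeg_qdeg (has_qdegZ nz_u gamma_c).
split; first exact: islinZ.
split; first by apply/qdeg_le_lt; rewrite qdeg_ltZ //; apply: qdeg_lt_leq beta_deg _; lia.
split; first exact: islinZ.
split; first by exists c; rewrite coefZ -(lead_coef_has_qdeg gamma_c) mulVf.
split=> //; move: f_eq; rewrite /padd /lact /= !comp_polyZ -!scalerDr => -[<- <-].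
by rewrite comp_polyZ scalerN.
Qed.

Lemma alg_step_min_error_span m0 :
  islin m0 -> qdeg_lt m0 k ->
  (forall m, islin m -> qdeg_lt m k -> (\dim (E m0) <= \dim (E m))%N) ->
  let J := (\dim (E m0) - i2)%N in
  [/\ forall j, (j < J)%N -> forall m, ~ step j m, exists m, step J m &
      forall m, step J m <-> closest_msg k g r m].
Proof.
move=> lin_m0 m0_deg m0_min J.
have [le_i2 step_m0] := alg_step_error_locator lin_m0 m0_deg.
split=> [j lt_jJ m /alg_step_error_span[lin_m m_deg le_m] | | m].
- by have := m0_min m lin_m m_deg; lia.
- by exists m0.
- split=> [/alg_step_error_span[lin_m m_deg le_m] | [lin_m [m_deg m_closest]]].
    split; [|split] => // m' lin_m' m'_deg; rewrite !rank_dist_error_span.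
    by have := m0_min m' lin_m' m'_deg; lia.
  have := m_closest m0 lin_m0 m0_deg; rewrite !rank_dist_error_span => le_m.
  have [_ step_m] := alg_step_error_locator lin_m m_deg.
  have := m0_min m lin_m m_deg => ge_m.
  by rewrite /J (_ : \dim (E m0) = \dim (E m)) //; lia.
Qed.

End Decoding.

End Gabidulin.

Theorem theorem23 (F : finFieldType) (L : fieldExtType F) (n k : nat)
    (g r : 'I_n -> L) :
  (1 <= k)%N -> (k <= n)%N ->
  free [seq g i | i <- enum 'I_n] ->
  forall b1 b2 : pair L,
  minimal_basis k g r b1 b2 -> lpos k b1 1 -> lpos k b2 2 ->
  forall l1 l2 : nat, wdeg k b1 = Some l1 -> wdeg k b2 = Some l2 ->
  exists J : nat,
    (forall j, (j < J)%N -> forall m, ~ alg_step b1 b2 l1 l2 j m) /\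
    (exists m, alg_step b1 b2 l1 l2 J m) /\
    (forall m : {poly L}, alg_step b1 b2 l1 l2 J m <-> closest_msg k g r m).
Proof.
move=> k_gt0 _ free_g b1 b2 [basis_gen _] lpos_b1 lpos_b2 l1 l2.
have [/(islin_inM free_g)[lin_b11 lin_b12] /(islin_inM free_g)[lin_b21 lin_b22]] :=
  inM_generators basis_gen.
have [i1 [b11_deg b12_deg]] := lpos1_qdeg lin_b11 lin_b12 lpos_b1.
have [i2 [b22_deg b21_deg]] := lpos2_qdeg lin_b21 lin_b22 lpos_b2.
rewrite (wdeg_lpos1 lin_b12 b11_deg b12_deg) (wdeg_lpos2 lin_b21 b22_deg b21_deg).
move=> [<-] [<-]; have [m0 [lin_m0 m0_deg] m0_min] := exists_min_error_span g r k.
have [no_step step_m0 step_closest] := alg_step_min_error_span k_gt0 free_g basis_gen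
  lin_b11 lin_b12 lin_b21 lin_b22 b11_deg b12_deg b22_deg b21_deg lin_m0 m0_deg m0_min.
by exists (\dim (error_span g r m0) - i2)%N.
Qed.
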